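(* Let $\lambda>0$, $\ell>0$, $a_1,a_2,a_3\in\mathbb{R}$, fix $z>0$, and consider the map $(x_0,y_0)\mapsto(x,y)$ given by $$x=x_0+\frac{\lambda z}{2\pi\ell}\left(a_1+2a_3\frac{x_0}{\ell}-2\frac{x_0y_0}{\ell^2}\right),\qquad y=y_0+\frac{\lambda z}{2\pi\ell}\left(a_2+\frac{3y_0^2-x_0^2}{\ell^2}\right).$$ Let $A'\doteq a_3+\frac{4\pi\ell^2}{3\lambda z}$. Then the set of caustic points of this map (points $(x,y)$ that are images of some $(x_0,y_0)$ at which the Jacobian determinant $\det\partial(x,y)/\partial(x_0,y_0)$ vanishes) is the closed curve $\zeta\in[0,2\pi)\mapsto(x_c(\zeta),y_c(\zeta))$ with $$x_c(\zeta)=a_1\frac{\lambda z}{2\pi\ell}+\frac{\sqrt3\,\lambda z}{2\pi\ell}A'^2\sin^2\!\left(\frac{\zeta}{2}\right)\sin(\zeta),$$ $$y_c(\zeta)=a_2\frac{\lambda z}{2\pi\ell}-\frac{\pi\ell^3}{6\lambda z}+\frac{3\lambda z}{2\pi\ell}A'^2\cos^2\!\left(\frac{\zeta}{2}\right)\cos(\zeta).$$ *)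

From Stdlib Require Import Reals.
From Coquelicot Require Import Coquelicot.
Open Scope R_scope.

Definition map_x (lam l a1 a3 z : R) (x0 y0 : R) : R :=
  x0 + lam * z / (2 * PI * l) * (a1 + 2 * a3 * x0 / l - 2 * x0 * y0 / l ^ 2).

Definition map_y (lam l a2 z : R) (x0 y0 : R) : R :=
  y0 + lam * z / (2 * PI * l) * (a2 + (3 * y0 ^ 2 - x0 ^ 2) / l ^ 2).

Definition jac_det (F G : R -> R -> R) (x0 y0 : R) : R :=
  Derive (fun t => F t y0) x0 * Derive (fun t => G x0 t) y0
  - Derive (fun t => F x0 t) y0 * Derive (fun t => G t y0) x0.

Definition caustic_set (F G : R -> R -> R) (p : R * R) : Prop :=
  exists x0 y0 : R, jac_det F G x0 y0 = 0 /\ p = (F x0 y0, G x0 y0).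

(* In the normalised source coordinates u = c x0 / l^2, w = c y0 / l^2 - K + 1/6, with
   c = lam z / (2 pi l) and K = c A' / (2 l), the Jacobian determinant of the map is
   12 K^2 - 12 w^2 - 4 u^2.  Its zero set is therefore the ellipse u^2 + 3 w^2 = 3 K^2,
   parametrised by u = sqrt 3 K sin t, w = K cos t, and pushing this ellipse through the
   map gives the stated curve after the half-angle formulas. *)
From Stdlib Require Import Reals Lra Psatz.
From Coquelicot Require Import Coquelicot.
Open Scope R_scope.

Lemma unit_circle_angle (a b : R) : a ^ 2 + b ^ 2 = 1 ->
  exists t, 0 <= t < 2 * PI /\ cos t = a /\ sin t = b.
Proof.
  intros Hab.
  assert (Ha : -1 <= a <= 1) by nra.
  pose proof (acos_bound a); pose proof PI_RGT_0.
  assert (Hb2 : 1 - a² = b²) by (unfold Rsqr; lra).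
  destruct (Rle_lt_dec 0 b) as [Hb | Hb].
  - exists (acos a); split; [lra |]; split; [now apply cos_acos |].
    rewrite sin_acos, Hb2 by lra; now apply sqrt_Rsqr.
  - assert (acos a <> 0).
    { intros E.
      assert (a = 1) by (rewrite <- (cos_acos a Ha), E; apply cos_0); nra. }
    exists (2 * PI - acos a); split; [lra |].
    rewrite cos_minus, sin_minus, cos_2PI, sin_2PI, cos_acos, sin_acos, Hb2 by lra.
    rewrite (Rsqr_neg b), sqrt_Rsqr by lra; split; lra.
Qed.

Lemma sqrt3_sqr : sqrt 3 ^ 2 = 3.
Proof. rewrite <- Rsqr_pow2; apply Rsqr_sqrt; lra. Qed.

Lemma ellipse_angle (K u w : R) : u ^ 2 + 3 * w ^ 2 = 3 * K ^ 2 ->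
  exists t, 0 <= t < 2 * PI /\ u = sqrt 3 * K * sin t /\ w = K * cos t.
Proof.
  intros Hell.
  pose proof Rlt_sqrt3_0; pose proof sqrt3_sqr.
  destruct (Req_dec K 0) as [K0 | K0].
  - exists 0; rewrite K0, sin_0, cos_0 in *; split; [pose proof PI_RGT_0; lra |].
    split; nra.
  - destruct (unit_circle_angle (w / K) (u / (sqrt 3 * K))) as [t [Ht [Hc Hs]]].
    { field_simplify; [rewrite sqrt3_sqr; field_simplify_eq; [nra | lra] | split; lra]. }
    exists t; split; [exact Ht |]; rewrite Hc, Hs; split; field; lra.
Qed.

Lemma PI_neq0 : PI <> 0.
Proof. pose proof PI_RGT_0; lra. Qed.

Lemma sin_half_sqr (t : R) : sin (t / 2) ^ 2 = (1 - cos t) / 2.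
Proof.
  pose proof (cos_2a_sin (t / 2)) as H; replace (2 * (t / 2)) with t in H by field; lra.
Qed.

Lemma cos_half_sqr (t : R) : cos (t / 2) ^ 2 = (1 + cos t) / 2.
Proof.
  pose proof (cos_2a_cos (t / 2)) as H; replace (2 * (t / 2)) with t in H by field; lra.
Qed.

Section Caustic.

Variables lam l a1 a2 a3 z : R.
Hypotheses (Hlam : 0 < lam) (Hl : 0 < l) (Hz : 0 < z).

Let c := lam * z / (2 * PI * l).
Let A' := a3 + 4 * PI * l ^ 2 / (3 * lam * z).
Let K := c * A' / (2 * l).

Definition critical_x (t : R) : R := l ^ 2 / c * (sqrt 3 * K * sin t).
Definition critical_y (t : R) : R := l ^ 2 / c * (K - 1 / 6 + K * cos t).

Lemma scale_neq0 : c <> 0.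
Proof. pose proof PI_RGT_0; unfold c; apply Rgt_not_eq, Rdiv_lt_0_compat; nra. Qed.

Lemma jac_det_ellipse (x0 y0 : R) :
  jac_det (map_x lam l a1 a3 z) (map_y lam l a2 z) x0 y0
  = 12 * K ^ 2 - 12 * (c * y0 / l ^ 2 - K + 1 / 6) ^ 2 - 4 * (c * x0 / l ^ 2) ^ 2.
Proof.
  pose proof PI_neq0.
  assert (Dxx : Derive (fun t => map_x lam l a1 a3 z t y0) x0
                = 1 + c * (2 * a3 / l - 2 * y0 / l ^ 2)).
  { apply is_derive_unique; unfold map_x, c; auto_derive; [repeat split; lra | field; lra]. }
  assert (Dyy : Derive (fun t => map_y lam l a2 z x0 t) y0 = 1 + c * (6 * y0 / l ^ 2)).
  { apply is_derive_unique; unfold map_y, c; auto_derive; [repeat split; lra | field; lra]. }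
  assert (Dxy : Derive (fun t => map_x lam l a1 a3 z x0 t) y0 = - 2 * c * x0 / l ^ 2).
  { apply is_derive_unique; unfold map_x, c; auto_derive; [repeat split; lra | field; lra]. }
  assert (Dyx : Derive (fun t => map_y lam l a2 z t y0) x0 = - 2 * c * x0 / l ^ 2).
  { apply is_derive_unique; unfold map_y, c; auto_derive; [repeat split; lra | field; lra]. }
  unfold jac_det; rewrite Dxx, Dyy, Dxy, Dyx; unfold K, A', c; field; lra.
Qed.

Lemma critical_on_ellipse (t : R) :
  (c * critical_x t / l ^ 2) ^ 2 + 3 * (c * critical_y t / l ^ 2 - K + 1 / 6) ^ 2
  = 3 * K ^ 2.
Proof.
  pose proof scale_neq0; pose proof (sin2_cos2 t) as Hsc; unfold Rsqr in Hsc.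
  assert (Hnorm : forall v, c * (l ^ 2 / c * v) / l ^ 2 = v) by (intro; field; lra).
  unfold critical_x, critical_y; rewrite !Hnorm.
  replace ((sqrt 3 * K * sin t) ^ 2) with (sqrt 3 ^ 2 * K ^ 2 * sin t ^ 2) by ring.
  rewrite sqrt3_sqr; nra.
Qed.

Lemma jac_det_critical (t : R) :
  jac_det (map_x lam l a1 a3 z) (map_y lam l a2 z) (critical_x t) (critical_y t) = 0.
Proof. rewrite jac_det_ellipse; pose proof (critical_on_ellipse t); lra. Qed.

Lemma critical_of_jac_det_eq0 (x0 y0 : R) :
  jac_det (map_x lam l a1 a3 z) (map_y lam l a2 z) x0 y0 = 0 ->
  exists t, 0 <= t < 2 * PI /\ x0 = critical_x t /\ y0 = critical_y t.
Proof.
  rewrite jac_det_ellipse; intros Hj; pose proof scale_neq0.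
  destruct (ellipse_angle K (c * x0 / l ^ 2) (c * y0 / l ^ 2 - K + 1 / 6))
    as [t [Ht [Hu Hw]]]; [lra |].
  exists t; split; [exact Ht |]; unfold critical_x, critical_y.
  rewrite <- Hu; replace (K - 1 / 6 + K * cos t) with (c * y0 / l ^ 2) by lra.
  split; field; lra.
Qed.

Lemma critical_image (t : R) :
  (map_x lam l a1 a3 z (critical_x t) (critical_y t),
   map_y lam l a2 z (critical_x t) (critical_y t))
  = (a1 * (lam * z / (2 * PI * l))
       + sqrt 3 * lam * z / (2 * PI * l) * A' ^ 2 * (sin (t / 2)) ^ 2 * sin t,
     a2 * (lam * z / (2 * PI * l)) - PI * l ^ 3 / (6 * lam * z)
       + 3 * lam * z / (2 * PI * l) * A' ^ 2 * (cos (t / 2)) ^ 2 * cos t).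
Proof.
  pose proof PI_neq0.
  assert (Hx2 : critical_x t ^ 2 = (l ^ 2 / c) ^ 2 * 3 * K ^ 2 * (1 - cos t ^ 2)).
  { pose proof (sin2_cos2 t) as Hsc; unfold Rsqr in Hsc; unfold critical_x.
    replace ((l ^ 2 / c * (sqrt 3 * K * sin t)) ^ 2)
      with ((l ^ 2 / c) ^ 2 * sqrt 3 ^ 2 * K ^ 2 * sin t ^ 2) by ring.
    rewrite sqrt3_sqr; replace (sin t ^ 2) with (1 - cos t ^ 2) by lra; ring. }
  rewrite sin_half_sqr, cos_half_sqr; unfold map_x, map_y; rewrite Hx2; f_equal;
    unfold critical_x, critical_y, K, A', c; field; lra.
Qed.

End Caustic.

Theorem mainTheorem8 (lam l a1 a2 a3 z : R) :
  0 < lam -> 0 < l -> 0 < z ->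
  let A' := a3 + 4 * PI * l ^ 2 / (3 * lam * z) in
  forall p : R * R,
    caustic_set (map_x lam l a1 a3 z) (map_y lam l a2 z) p <->
    exists zeta : R, 0 <= zeta < 2 * PI /\
      p = (a1 * (lam * z / (2 * PI * l))
             + sqrt 3 * lam * z / (2 * PI * l) * A' ^ 2 * (sin (zeta / 2)) ^ 2 * sin zeta,
           a2 * (lam * z / (2 * PI * l)) - PI * l ^ 3 / (6 * lam * z)
             + 3 * lam * z / (2 * PI * l) * A' ^ 2 * (cos (zeta / 2)) ^ 2 * cos zeta).
Proof.
  intros Hlam Hl Hz A' p; split.
  - intros [x0 [y0 [Hj ->]]].
    destruct (critical_of_jac_det_eq0 lam l a1 a2 a3 z Hlam Hl Hz x0 y0 Hj)
      as [t [Ht [-> ->]]].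
    exists t; split; [exact Ht | apply critical_image; assumption].
  - intros [t [Ht ->]].
    exists (critical_x lam l a3 z t), (critical_y lam l a3 z t); split.
    + apply jac_det_critical; assumption.
    + symmetry; apply critical_image; assumption.
Qed.
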